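(* Let $T$ be a strongly consistent $\mathcal{L}$-theory in $RGL^*$ and $\varphi,\psi$ $\mathcal{L}$-sentences. Then at least one of $T\cup\{\varphi\to\psi\}$ and $T\cup\{\psi\to\varphi\}$ is strongly consistent.
   Context: $\mathcal{L}$ is a first-order language with countably many predicate, function and constant symbols. Formulas of $RGL^*$ are built from atomic formulas and the nullary connectives $\bar r$ ($r\in[0,1]\cap\mathbb{Q}$, including $\bar0,\bar1$) by $\wedge,\to,\forall,\exists$; $\neg\varphi:=\varphi\to\bar1$, $\varphi\vee\psi:=((\varphi\to\psi)\to\psi)\wedge((\psi\to\varphi)\to\varphi)$, $\varphi\leftrightarrow\psi:=(\varphi\to\psi)\wedge(\psi\to\varphi)$. Proof system $\vdash$: all instances of (G1) $(\varphi\to\psi)\to((\psi\to\chi)\to(\varphi\to\chi))$; (G2) $(\varphi\wedge\psi)\to\varphi$; (G3) $(\varphi\wedge\psi)\to(\psi\wedge\varphi)$; (G4) $\varphi\to(\varphi\wedge\varphi)$; (G5) $(\varphi\to(\psi\to\chi))\leftrightarrow((\varphi\wedge\psi)\to\chi)$; (G6) $((\varphi\to\psi)\to\chi)\to(((\psi\to\varphi)\to\chi)\to\chi)$; (G7) $\bar1\to\varphi$; (G$\forall$1) $(\forall x\,\varphi(x))\to\varphi(t)$; (G$\forall$2) $\forall x(\psi\to\varphi(x))\to(\psi\to\forall x\,\varphi(x))$; (G$\forall$3) $\forall x(\psi\vee\varphi(x))\to(\psi\vee\forall x\,\varphi(x))$; (G$\exists$1) $\varphi(t)\to\exists x\,\varphi(x)$;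 (G$\exists$2) $\exists x(\psi\to\varphi(x))\to(\psi\to\exists x\,\varphi(x))$ (with $t$ substitutable for $x$ and $x$ not free in $\psi$); (RGL1) $(\bar r\wedge\bar s)\leftrightarrow\overline{\max\{r,s\}}$; (RGL2) $\bar r\to\bar s$ if $r\ge s$, $(\bar r\to\bar s)\leftrightarrow\bar s$ if $r<s$; (RGL3) $\neg\neg\bar r$ for $r<1$. Rules: modus ponens and generalization. A theory (set of sentences) $T$ is strongly consistent if $T\nvdash\bar r$ for every rational $r\in(0,1]$. *)

From HB Require Import structures.
From mathcomp Require Import all_boot all_order all_algebra.
From Stdlib Require Vector.
Set Implicit Arguments. Unset Strict Implicit. Unset Printing Implicit Defensive.
Import Order.TTheory GRing.Theory Num.Theory.
Local Open Scope ring_scope.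

Record signature := Signature {
  Psym : Type; Fsym : Type; Csym : Type;
  par : Psym -> nat; far : Fsym -> nat }.

Definition countable_sig (S : signature) : Prop :=
  (exists f : Psym S -> nat, injective f) /\
  (exists f : Fsym S -> nat, injective f) /\
  (exists f : Csym S -> nat, injective f).

Record unitQ := UnitQ { uq : rat; uq_in01 : (0 <= uq) && (uq <= 1) }.

Definition uq_zero : unitQ := @UnitQ 0 isT.
Definition uq_one : unitQ := @UnitQ 1 isT.

Section Syntax.
Variable S : signature.

(** Terms, with de Bruijn variables. *)
Inductive term : Type :=
| Var : nat -> term
| Cnst : Csym S -> term
| Func : forall f : Fsym S, Vector.t term (far f) -> term.
Arguments Func : clear implicits.

Inductive fml : Type :=
| Atom : forall p : Psym S, Vector.t term (par p) -> fml
| Tc : unitQ -> fml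
| And : fml -> fml -> fml
| Imp : fml -> fml -> fml
| All : fml -> fml               (* binds de Bruijn index 0 *)
| Ex : fml -> fml.
Arguments Atom : clear implicits.

Fixpoint tsubst (s : nat -> term) (t : term) : term :=
  match t with
  | Var n => s n
  | Cnst c => Cnst c
  | Func f v => Func f (Vector.map (tsubst s) v)
  end.

Definition up (s : nat -> term) : nat -> term :=
  fun n => match n with
           | 0 => Var 0
           | n'.+1 => tsubst (fun k => Var k.+1) (s n')
           end.

Fixpoint subst (s : nat -> term) (A : fml) : fml :=
  match A with
  | Atom p v => Atom p (Vector.map (tsubst s) v)
  | Tc r => Tc r
  | And A B => And (subst s A) (subst s B)
  | Imp A B => Imp (subst s A) (subst s B)
  | All A => All (subst (up s) A)
  | Ex A => Ex (subst (up s) A)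
  end.

(** lift: shift all free variables by one ("x not free in psi"). *)
Definition lift (A : fml) : fml := subst (fun k => Var k.+1) A.
Definition inst (A : fml) (t : term) : fml :=
  subst (fun n => match n with 0 => t | n'.+1 => Var n' end) A.

Fixpoint tclosed (n : nat) (t : term) : Prop :=
  match t with
  | Var k => (k < n)%N
  | Cnst _ => True
  | Func f v =>
      (fix go m (w : Vector.t term m) : Prop :=
         match w with
         | Vector.nil => True
         | Vector.cons x _ w' => tclosed n x /\ go _ w'
         end) _ v
  end.

Fixpoint closed (n : nat) (A : fml) : Prop :=
  match A with
  | Atom p v => Vector.Forall (tclosed n) v
  | Tc _ => True
  | And A B => closed n A /\ closed n B
  | Imp A B => closed n A /\ closed n B
  | All A => closed n.+1 A
  | Ex A => closed n.+1 A
  end.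

Definition sentence (A : fml) : Prop := closed 0 A.

Definition Neg (A : fml) : fml := Imp A (Tc uq_one).
Definition Or (A B : fml) : fml :=
  And (Imp (Imp A B) B) (Imp (Imp B A) A).
Definition Iff (A B : fml) : fml := And (Imp A B) (Imp B A).

Inductive axiom : fml -> Prop :=
| G1 A B C : axiom (Imp (Imp A B) (Imp (Imp B C) (Imp A C)))
| G2 A B : axiom (Imp (And A B) A)
| G3 A B : axiom (Imp (And A B) (And B A))
| G4 A : axiom (Imp A (And A A))
| G5 A B C : axiom (Iff (Imp A (Imp B C)) (Imp (And A B) C))
| G6 A B C : axiom (Imp (Imp (Imp A B) C) (Imp (Imp (Imp B A) C) C))
| G7 A : axiom (Imp (Tc uq_one) A)
| GAll1 A t : axiom (Imp (All A) (inst A t))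
| GAll2 B A : axiom (Imp (All (Imp (lift B) A)) (Imp B (All A)))
| GAll3 B A : axiom (Imp (All (Or (lift B) A)) (Or B (All A)))
| GEx1 A t : axiom (Imp (inst A t) (Ex A))
| GEx2 B A : axiom (Imp (Ex (Imp (lift B) A)) (Imp B (Ex A)))
| RGL1 r s m : uq m = Num.max (uq r) (uq s) ->
    axiom (Iff (And (Tc r) (Tc s)) (Tc m))
| RGL2a r s : uq s <= uq r -> axiom (Imp (Tc r) (Tc s))
| RGL2b r s : uq r < uq s -> axiom (Iff (Imp (Tc r) (Tc s)) (Tc s))
| RGL3 r : uq r < 1 -> axiom (Neg (Neg (Tc r))).

Inductive prv (T : fml -> Prop) : fml -> Prop :=
| prv_ax A : axiom A -> prv T A
| prv_hyp A : T A -> prv T A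
| prv_mp A B : prv T A -> prv T (Imp A B) -> prv T B
| prv_gen A : prv T A -> prv T (All A).

Definition theory (T : fml -> Prop) : Prop := forall A, T A -> sentence A.

Definition strongly_consistent (T : fml -> Prop) : Prop :=
  forall r : unitQ, 0 < uq r -> ~ prv T (Tc r).

Definition add_ax (T : fml -> Prop) (A : fml) : fml -> Prop :=
  fun B => T B \/ B = A.

End Syntax.

From Pilot Require Import Defs.
From mathcomp Require Import all_boot all_order all_algebra.
From Stdlib Require Import Classical.
Import Order.TTheory GRing.Theory Num.Theory.

(* If both extensions are not strongly consistent, the deduction theorem gives
   T |- (phi -> psi) -> r and T |- (psi -> phi) -> s with r, s > 0.  Weakening
   both constants to t = min r s, the prelinearity axiom (G6) yields T |- t,
   contradicting the strong consistency of T. *)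

Set Implicit Arguments.
Unset Strict Implicit.

Section Closed.
Variable S : signature.

Lemma tsubst_closed_id (t : term S) n s :
  (forall k, (k < n)%N -> s k = Var S k) -> tclosed n t -> tsubst s t = t.
Proof.
move: t; fix IH 1 => -[k|c|f v] Hs /= Hc; first exact: Hs; first by [].
congr Func; move: Hc; elim: v => [|x m w IHw] //= [Hx Hw].
by rewrite IH // IHw.
Qed.

Lemma subst_closed_id (A : fml S) n s :
  (forall k, (k < n)%N -> s k = Var S k) -> Defs.closed n A -> subst s A = A.
Proof.
have upV m s' : (forall k, (k < m)%N -> s' k = Var S k) ->
    forall k, (k < m.+1)%N -> up s' k = Var S k.
  by move=> Hs' [|k] //= Hk; rewrite Hs'.
elim: A n s => [p v|r|A IHA B IHB|A IHA B IHB|A IHA|A IHA] n s Hs /=.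
- move=> Hc; congr Atom; elim: Hc => [|m x w Hx _ IHw] //=.
  by rewrite IHw (tsubst_closed_id Hs Hx).
- by [].
- by move=> [HA HB]; rewrite (IHA n) // (IHB n).
- by move=> [HA HB]; rewrite (IHA n) // (IHB n).
- by move=> HA; rewrite (IHA n.+1) //; apply: upV.
- by move=> HA; rewrite (IHA n.+1) //; apply: upV.
Qed.

Lemma lift_sentence (A : fml S) : sentence A -> Defs.lift A = A.
Proof. by move=> HA; apply: (subst_closed_id (n := 0)). Qed.

End Closed.

Section Derivations.
Variables (S : signature) (T : fml S -> Prop).

Lemma prv_and_l (A B : fml S) : prv T (And A B) -> prv T A.
Proof. by move=> H; apply: (prv_mp H); apply/prv_ax/G2. Qed.

Lemma prv_and_r (A B : fml S) : prv T (And A B) -> prv T B.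
Proof. by move=> H; apply: (@prv_and_l B A); apply: (prv_mp H); apply/prv_ax/G3. Qed.

Lemma prv_imp_trans (A B C : fml S) :
  prv T (Imp A B) -> prv T (Imp B C) -> prv T (Imp A C).
Proof. by move=> HAB HBC; apply: (prv_mp HBC); apply: (prv_mp HAB); apply/prv_ax/G1. Qed.

Lemma prv_curry (A B C : fml S) :
  prv T (Imp (And A B) C) -> prv T (Imp A (Imp B C)).
Proof. by move=> H; apply: (prv_mp H); apply: prv_and_r; apply/prv_ax/G5. Qed.

Lemma prv_uncurry (A B C : fml S) :
  prv T (Imp A (Imp B C)) -> prv T (Imp (And A B) C).
Proof. by move=> H; apply: (prv_mp H); apply: prv_and_l; apply/prv_ax/G5. Qed.

Lemma prv_imp_swap (A B C : fml S) :
  prv T (Imp A (Imp B C)) -> prv T (Imp B (Imp A C)).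
Proof.
move=> H; apply: prv_curry; apply: (prv_imp_trans (B := And A B)).
  exact/prv_ax/G3.
exact: prv_uncurry.
Qed.

Lemma prv_imp_contract (A B : fml S) :
  prv T (Imp A (Imp A B)) -> prv T (Imp A B).
Proof.
move=> H; apply: (prv_imp_trans (B := And A A)); first exact/prv_ax/G4.
exact: prv_uncurry.
Qed.

Lemma prv_K (A B : fml S) : prv T (Imp A (Imp B A)).
Proof. by apply: prv_curry; apply/prv_ax/G2. Qed.

Lemma prv_imp_refl (A : fml S) : prv T (Imp A A).
Proof. by apply: prv_imp_contract; apply: prv_K. Qed.

Lemma prv_weaken_imp (A B : fml S) : prv T B -> prv T (Imp A B).
Proof. by move=> HB; apply: (prv_mp HB); apply: prv_K. Qed.

Lemma prv_prelinear (A B C : fml S) :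
  prv T (Imp (Imp A B) C) -> prv T (Imp (Imp B A) C) -> prv T C.
Proof. by move=> H1 H2; apply: (prv_mp H2); apply: (prv_mp H1); apply/prv_ax/G6. Qed.

Lemma prv_imp_Tc_le (A : fml S) (r s : unitQ) :
  (uq s <= uq r)%R -> prv T (Imp A (Tc S r)) -> prv T (Imp A (Tc S s)).
Proof. by move=> Hsr H; apply: (prv_imp_trans H); apply/prv_ax/RGL2a. Qed.

End Derivations.

(* Only the added formula needs to be a sentence: generalization is then sound
   under the hypothesis because lifting [A] leaves it unchanged (GAll2). *)
Lemma deduction (S : signature) (T : fml S -> Prop) (A B : fml S) :
  sentence A -> prv (add_ax T A) B -> prv T (Imp A B).
Proof.
move=> HA; elim => {B} [B HB | B [HB | ->] | B C _ IHB _ IHBC | B _ IHB].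
- exact/prv_weaken_imp/prv_ax.
- exact/prv_weaken_imp/prv_hyp.
- exact: prv_imp_refl.
- exact/prv_imp_contract/(prv_imp_trans IHB)/prv_imp_swap.
- have H := prv_gen IHB; rewrite -{1}(lift_sentence HA) in H.
  by apply: (prv_mp H); apply/prv_ax/GAll2.
Qed.

Lemma not_strongly_consistent_add_ax (S : signature) (T : fml S -> Prop) A :
  sentence A -> ~ strongly_consistent (add_ax T A) ->
  exists2 r : unitQ, (0 < uq r)%R & prv T (Imp A (Tc S r)).
Proof.
move=> HA HnC; apply: NNPP => Hn; apply: HnC => r Hr Hp.
by apply: Hn; exists r => //; apply: deduction.
Qed.

Theorem mainTheorem6 (S : signature) (HS : countable_sig S)
  (T : fml S -> Prop) (HT : theory T) (phi psi : fml S)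
  (Hphi : sentence phi) (Hpsi : sentence psi) :
  strongly_consistent T ->
  strongly_consistent (add_ax T (Imp phi psi)) \/
  strongly_consistent (add_ax T (Imp psi phi)).
Proof.
move=> HC; apply: NNPP => /not_or_and [H1 H2].
have [r Hr Pr] := not_strongly_consistent_add_ax (A := Imp phi psi) (conj Hphi Hpsi) H1.
have [s Hs Ps] := not_strongly_consistent_add_ax (A := Imp psi phi) (conj Hpsi Hphi) H2.
case: (leP (uq r) (uq s)) => [Hrs | /ltW Hsr].
- apply: (HC r Hr); apply: (prv_prelinear Pr).
  exact: prv_imp_Tc_le Ps.
- apply: (HC s Hs); apply: prv_prelinear Ps.
  exact: prv_imp_Tc_le Pr.
Qed.
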